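(* Suppose the index function satisfies $0\le n(\eta)<5$ for all $\eta>0$. Then along the orbit of every regular perfect fluid solution in the variables $(U,Q,\Omega)$ one has $\Phi(U,Q):=(4-7Q)U-3(1-2Q)>0$, i.e. the regular solutions lie on the outer side of the surface $\{\Phi=0\}$, which is the set of regular orbits of the exact polytrope with index $5$. Moreover, on the surface $\{\Phi=0\}$ within the interior of the cube, $\frac{d\Phi}{d\lambda}=3(1-2Q)(1-U)^2Q\,(5-n(\Omega))$, where $Q\le1/2$ on this surface.
   Context: Equation of state: $\rho=\rho(p)$ with $\rho>0$ for $p>0$, $\eta(p)=\int_0^p dp'/\rho(p')$ finite; index function $n(\eta)=\frac{\eta}{\rho}\frac{d\rho}{d\eta}$. Regular perfect fluid solution: solution of $dm/dr=4\pi r^2\rho(p)$, $dp/dr=-m\rho(p)/r^2$ with $m\to0$, $p\to p_c\in(0,\infty)$ as $r\to0$. Variables: $U=u/(1+u)$, $Q=q/(1+q)$, $\Omega=\omega/(1+\omega)$ with $u=4\pi r^3\rho/m$, $q=m/(r\eta)$, $\omega=\eta^a$ ($a>0$), satisfying $\frac{dU}{d\lambda}=U(1-U)[(1-Q)(3-4U)-n(\Omega)Q(1-U)]$, $\frac{dQ}{d\lambda}=Q(1-Q)[(2U-1)(1-Q)+Q(1-U)]$, $\frac{d\Omega}{d\lambda}=-a\Omega(1-\Omega)Q(1-U)$ on the cube $[0,1]^3$, where $n(\Omega)=n(\eta)$ at $\eta=(\Omega/(1-\Omega))^{1/a}$. Regular orbits emanate as $\lambda\to-\infty$ from the line $\{U=3/4,Q=0\}$.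 *)

From Stdlib Require Import Reals Lra.
From Coquelicot Require Import Coquelicot.
Open Scope R_scope.

Definition eos_eta (rho : R -> R) (p : R) : R :=
  RInt_gen (fun x => / rho x) (at_right 0) (at_point p).

(* index function n(eta) = (eta/rho) d rho/d eta, where rho is viewed as a
   function of eta through the inverse P of p |-> eta(p). *)
Definition index_fun (rho P : R -> R) (e : R) : R :=
  e / rho (P e) * Derive (fun x => rho (P x)) e.

Definition nOmega (rho P : R -> R) (a W : R) : R :=
  index_fun rho P (Rpower (W / (1 - W)) (1 / a)).

Definition FU (n : R -> R) (U Q W : R) : R :=
  U * (1 - U) * ((1 - Q) * (3 - 4 * U) - n W * Q * (1 - U)).
Definition FQ (U Q : R) : R :=
  Q * (1 - Q) * ((2 * U - 1) * (1 - Q) + Q * (1 - U)).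
Definition FW (a U Q W : R) : R :=
  - a * W * (1 - W) * Q * (1 - U).

Definition Phi (U Q : R) : R := (4 - 7 * Q) * U - 3 * (1 - 2 * Q).

Definition u_var (rho m p : R -> R) (r : R) : R :=
  4 * PI * r ^ 3 * rho (p r) / m r.
Definition q_var (rho m p : R -> R) (r : R) : R :=
  m r / (r * eos_eta rho (p r)).
Definition U_var (rho m p : R -> R) (r : R) : R :=
  u_var rho m p r / (1 + u_var rho m p r).
Definition Q_var (rho m p : R -> R) (r : R) : R :=
  q_var rho m p r / (1 + q_var rho m p r).

From Stdlib Require Import Reals Lra.
From Coquelicot Require Import Coquelicot.
Open Scope R_scope.

(** With u = 4 pi r^3 rho / m and q = m / (r eta) we have U = u/(1+u), Q = q/(1+q) and
    (1+u)(1+q) Phi(U,Q) = u + 3q - 3 = D / (m eta), where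
    D = 4 pi r^3 rho eta + 3 m^2/r - 3 m eta.
    Along a solution m' = 4 pi r^2 rho, eta' = -m/r^2 and rho' = -(m/r^2) drho/deta, so
    D' = 4 pi r m (5 rho - eta drho/deta) = 4 pi r m rho (5 - n) > 0.
    As 0 < eta <= eta(p_c), D >= -3 eta(p_c) m, which tends to 0 at the centre; hence D > 0.
    On {Phi = 0} one has U = 3(1-2Q)/(4-7Q), and substituting this into
    dPhi/dlambda = (4-7Q) U' + (6-7U) Q' gives the stated formula. *)

Lemma at_right_0_lt c : 0 < c -> at_right 0 (fun a => 0 < a < c).
Proof.
  intros Hc.
  apply (locally_interval _ 0 (- c) c); simpl; try lra.
  intros y _ Hy Hy0; lra.
Qed.

Lemma locally_gt (a x : R) : a < x -> locally x (fun y => a < y).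
Proof.
  intros Hx.
  apply (locally_interval _ x a p_infty); simpl; auto.
Qed.

Lemma locally_between (a b x : R) : a < x < b -> locally x (fun y => a < y < b).
Proof.
  intros Hx.
  apply (locally_interval _ x a b); simpl; auto; lra.
Qed.

Lemma incr_on_interval (f df : R -> R) (a b : R) :
  (forall x, a < x < b -> is_derive f x (df x)) ->
  (forall x, a < x < b -> 0 < df x) ->
  forall x y, a < x -> x < y -> y < b -> f x < f y.
Proof.
  intros Hf Hdf x y Hx Hxy Hy.
  apply (incr_function f a b df); simpl; try lra.
  - intros z Hz1 Hz2; apply Hf; lra.
  - intros z Hz1 Hz2; apply Hdf; lra.
Qed.

Lemma incr_gt_right_lim (f h : R -> R) (L b : R) :
  (forall x y, 0 < x -> x < y -> y < b -> f x < f y) ->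
  (forall s, 0 < s < b -> h s <= f s) ->
  filterlim h (at_right 0) (locally L) ->
  forall s, 0 < s < b -> L < f s.
Proof.
  intros Hincr Hhf Hlim s Hs.
  assert (L_le : L <= f (s / 2)).
  { apply (filterlim_le (F := at_right 0) h (fun _ => f (s / 2)) L (f (s / 2))); auto.
    - generalize (at_right_0_lt (s / 2) ltac:(lra)); apply filter_imp.
      intros t Ht; apply Rle_trans with (f t); [apply Hhf; lra | left; apply Hincr; lra].
    - apply filterlim_const. }
  apply Rle_lt_trans with (1 := L_le), Hincr; lra.
Qed.

Lemma filter_prod_right_0_at_point (Pr : R * R -> Prop) (p : R) :
  0 < p -> (forall a, 0 < a < p -> Pr (a, p)) -> filter_prod (at_right 0) (at_point p) Pr.
Proof.
  intros Hp H.
  apply (Filter_prod _ _ _ (fun a => 0 < a < p) (fun b => b = p)).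
  - apply at_right_0_lt; auto.
  - reflexivity.
  - intros x y Hx ->; apply H; auto.
Qed.

Definition polytrope5_defect (r m rh e : R) : R :=
  4 * PI * r ^ 3 * rh * e + 3 * m ^ 2 / r - 3 * m * e.

Lemma Phi_homographic u q : 0 < u -> 0 < q ->
  Phi (u / (1 + u)) (q / (1 + q)) = (u + 3 * q - 3) / ((1 + u) * (1 + q)).
Proof. intros Hu Hq; unfold Phi; field; lra. Qed.

Lemma Phi_pos_of_defect_pos r m rh e : 0 < r -> 0 < m -> 0 < rh -> 0 < e ->
  0 < polytrope5_defect r m rh e ->
  Phi ((4 * PI * r ^ 3 * rh / m) / (1 + 4 * PI * r ^ 3 * rh / m))
      ((m / (r * e)) / (1 + m / (r * e))) > 0.
Proof.
  intros Hr Hm Hrh He Hdef.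
  assert (Hu : 0 < 4 * PI * r ^ 3 * rh / m).
  { generalize PI_RGT_0 (pow_lt r 3 Hr); intros.
    apply Rdiv_lt_0_compat; auto.
    apply Rmult_lt_0_compat; [apply Rmult_lt_0_compat; [apply Rmult_lt_0_compat |] |]; lra. }
  assert (Hq : 0 < m / (r * e)) by (apply Rdiv_lt_0_compat, Rmult_lt_0_compat; auto).
  rewrite Phi_homographic by auto.
  assert (Hsum : 4 * PI * r ^ 3 * rh / m + 3 * (m / (r * e)) - 3
                 = polytrope5_defect r m rh e / (m * e)).
  { unfold polytrope5_defect; field; lra. }
  apply Rlt_gt, Rdiv_lt_0_compat; [| apply Rmult_lt_0_compat; lra].
  rewrite Hsum; apply Rdiv_lt_0_compat, Rmult_lt_0_compat; auto.
Qed.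

Lemma is_derive_polytrope5_defect (m rh e : R -> R) (r dm drh de : R) : r <> 0 ->
  is_derive m r dm -> is_derive rh r drh -> is_derive e r de ->
  is_derive (fun s => polytrope5_defect s (m s) (rh s) (e s)) r
    (12 * PI * r ^ 2 * rh r * e r + 4 * PI * r ^ 3 * (drh * e r + rh r * de)
     + 6 * m r * dm / r - 3 * m r ^ 2 / r ^ 2 - 3 * (dm * e r + m r * de)).
Proof.
  intros Hr Hm Hrh He; unfold polytrope5_defect; auto_derive.
  - repeat split; auto; eexists; eauto.
  - replace (Derive (fun x => m x) r) with dm by (symmetry; apply is_derive_unique; auto).
    replace (Derive (fun x => rh x) r) with drh by (symmetry; apply is_derive_unique; auto).
    replace (Derive (fun x => e x) r) with de by (symmetry; apply is_derive_unique; auto).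
    field; auto.
Qed.

Section Enthalpy.

Variable rho : R -> R.
Hypothesis rho_pos : forall p, 0 < p -> 0 < rho p.
Hypothesis eta_ex :
  forall p, 0 < p -> ex_RInt_gen (fun x => / rho x) (at_right 0) (at_point p).

Lemma ex_RInt_inv_rho p1 p2 : 0 < p1 -> 0 < p2 -> ex_RInt (fun x => / rho x) p1 p2.
Proof.
  assert (Hle : forall p1 p2, 0 < p1 <= p2 -> ex_RInt (fun x => / rho x) p1 p2).
  { intros q1 q2 Hq.
    destruct (eta_ex q2 ltac:(lra)) as [l Hl].
    destruct (Hl (fun _ => True) filter_true) as [Qa Qb HQa HQb Hall].
    destruct (filter_ex (F := at_right 0) _
      (filter_and (F := at_right 0) _ _ (at_right_0_lt q1 ltac:(lra)) HQa)) as [a [Ha HQa_a]].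
    destruct (Hall a q2 HQa_a HQb) as [y [Hy _]].
    apply (@ex_RInt_Chasles_2 R_CompleteNormedModule _ a); [lra | exists y; exact Hy]. }
  intros H1 H2; destruct (Rle_dec p1 p2).
  - apply Hle; lra.
  - apply ex_RInt_swap, Hle; lra.
Qed.

Lemma is_RInt_eos_eta p1 p2 : 0 < p1 -> 0 < p2 ->
  is_RInt (fun x => / rho x) p1 p2 (eos_eta rho p2 - eos_eta rho p1).
Proof.
  intros H1 H2.
  assert (Hex := ex_RInt_inv_rho p1 p2 H1 H2).
  assert (Hsum : is_RInt_gen (fun x => / rho x) (at_right 0) (at_point p2)
                   (plus (eos_eta rho p1) (RInt (fun x => / rho x) p1 p2))).
  { apply (@is_RInt_gen_Chasles R_NormedModule _ _ _ _ _ p1).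
    - apply (RInt_gen_correct (V := R_CompleteNormedModule)), eta_ex; auto.
    - apply is_RInt_gen_at_point, (RInt_correct (V := R_CompleteNormedModule)), Hex. }
  unfold eos_eta at 1; rewrite (is_RInt_gen_unique _ _ Hsum).
  replace (plus _ _ - eos_eta rho p1) with (RInt (fun x => / rho x) p1 p2)
    by (unfold plus; simpl; lra).
  apply (RInt_correct (V := R_CompleteNormedModule)), Hex.
Qed.

(* Since 1/rho > 0, the norm bound |eta| <= eta for the generalized integral forces eta >= 0. *)
Lemma eos_eta_nonneg p : 0 < p -> 0 <= eos_eta rho p.
Proof.
  intros Hp.
  assert (Hint := RInt_gen_correct _ (eta_ex p Hp)).
  assert (Hord : filter_prod (at_right 0) (at_point p) (fun ab => fst ab <= snd ab)).
  { apply filter_prod_right_0_at_point; auto; intros a Ha; simpl; lra. }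
  assert (Hnorm : filter_prod (at_right 0) (at_point p)
    (fun ab => forall x, fst ab <= x <= snd ab -> norm (/ rho x) <= / rho x)).
  { apply filter_prod_right_0_at_point; auto; intros a Ha x Hx; simpl in Hx |- *.
    right; apply Rabs_pos_eq; left; apply Rinv_0_lt_compat, rho_pos; lra. }
  assert (Habs := RInt_gen_norm _ _ _ _ Hord Hnorm Hint Hint).
  apply Rle_trans with (2 := Habs), Rabs_pos.
Qed.

Lemma is_RInt_eos_eta_near p0 p : 0 < p0 -> 0 < p ->
  locally p (fun z => is_RInt (fun x => / rho x) p0 z (eos_eta rho z - eos_eta rho p0)).
Proof.
  intros H0 Hp.
  generalize (locally_gt 0 p Hp); apply filter_imp.
  intros z Hz; apply is_RInt_eos_eta; auto.
Qed.

Lemma continuous_eos_eta p : 0 < p -> continuous (eos_eta rho) p.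
Proof.
  intros Hp.
  apply (continuous_ext (fun z => plus (eos_eta rho z - eos_eta rho p) (eos_eta rho p))).
  { intro z; unfold plus; simpl; ring. }
  apply (continuous_plus (fun z => eos_eta rho z - eos_eta rho p)).
  - apply (continuous_RInt_1 (fun x => / rho x) p p).
    apply is_RInt_eos_eta_near; auto.
  - apply continuous_const.
Qed.

Lemma eos_eta_le p1 p2 : 0 < p1 <= p2 -> eos_eta rho p1 <= eos_eta rho p2.
Proof.
  intros Hp.
  assert (Hint := is_RInt_eos_eta p1 p2 ltac:(lra) ltac:(lra)).
  assert (Hge : 0 <= RInt (fun x => / rho x) p1 p2).
  { apply RInt_ge_0; [lra | eexists; exact Hint |].
    intros x Hx; left; apply Rinv_0_lt_compat, rho_pos; lra. }
  rewrite (is_RInt_unique _ _ _ _ Hint) in Hge; lra.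
Qed.

Variable P : R -> R.
Hypothesis P_eos_eta : forall p, 0 < p -> P (eos_eta rho p) = p.
Hypothesis rhoP_derivable :
  forall p, 0 < p -> ex_derive (fun x => rho (P x)) (eos_eta rho p).

(* rho = (rho o P) o eta near p, a composition of continuous maps. *)
Lemma continuous_rho p : 0 < p -> continuous rho p.
Proof.
  intros Hp.
  apply (continuous_ext_loc _ (fun y => rho (P (eos_eta rho y)))).
  - generalize (locally_gt 0 p Hp); apply filter_imp.
    intros y Hy; rewrite P_eos_eta; auto.
  - apply (continuous_comp (eos_eta rho) (fun x => rho (P x))).
    + apply continuous_eos_eta; auto.
    + apply (ex_derive_continuous (K := R_AbsRing) (V := R_NormedModule)), rhoP_derivable; auto.
Qed.

Lemma continuous_inv_rho p : 0 < p -> continuous (fun x => / rho x) p.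
Proof.
  intros Hp.
  apply continuous_Rinv_comp; [apply continuous_rho; auto | apply Rgt_not_eq, rho_pos; auto].
Qed.

Lemma is_derive_eos_eta p : 0 < p -> is_derive (eos_eta rho) p (/ rho p).
Proof.
  intros Hp.
  assert (Hdiff : is_derive (fun z => eos_eta rho z - eos_eta rho (p / 2)) p (/ rho p)).
  { apply (is_derive_RInt (fun x => / rho x) _ (p / 2)).
    - apply is_RInt_eos_eta_near; lra.
    - apply continuous_inv_rho; auto. }
  assert (Hsum := is_derive_plus _ _ _ _ _ Hdiff (is_derive_const (eos_eta rho (p / 2)) p)).
  replace (/ rho p) with (plus (/ rho p) zero) by (unfold plus, zero; simpl; ring).
  eapply is_derive_ext; [| exact Hsum].
  intro z; unfold plus; simpl; ring.
Qed.

Lemma eos_eta_pos p : 0 < p -> 0 < eos_eta rho p.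
Proof.
  intros Hp.
  assert (Hint := is_RInt_eos_eta (p / 2) p ltac:(lra) Hp).
  assert (Hgt : 0 < RInt (fun x => / rho x) (p / 2) p).
  { apply RInt_gt_0; [lra | |].
    - intros x Hx; apply Rinv_0_lt_compat, rho_pos; lra.
    - intros x Hx; apply continuous_inv_rho; lra. }
  rewrite (is_RInt_unique _ _ _ _ Hint) in Hgt.
  generalize (eos_eta_nonneg (p / 2) ltac:(lra)); lra.
Qed.

Hypothesis index_lt_5 : forall p, 0 < p -> index_fun rho P (eos_eta rho p) < 5.

Lemma eta_drho_lt_5rho p : 0 < p ->
  eos_eta rho p * Derive (fun x => rho (P x)) (eos_eta rho p) < 5 * rho p.
Proof.
  intros Hp.
  assert (Hn := index_lt_5 p Hp).
  unfold index_fun in Hn; rewrite P_eos_eta in Hn by auto.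
  assert (Hrho := rho_pos p Hp).
  apply (Rmult_lt_compat_r (rho p)) in Hn; auto.
  replace (eos_eta rho p / rho p * Derive (fun x => rho (P x)) (eos_eta rho p) * rho p)
    with (eos_eta rho p * Derive (fun x => rho (P x)) (eos_eta rho p)) in Hn
    by (field; lra).
  lra.
Qed.

Section RegularSolution.

Variables (Rad pc : R) (m p : R -> R).
Hypothesis structure_eqs : forall r, 0 < r < Rad ->
  0 < p r /\
  is_derive m r (4 * PI * r ^ 2 * rho (p r)) /\
  is_derive p r (- (m r * rho (p r)) / r ^ 2).
Hypothesis m_lim : filterlim m (at_right 0) (locally 0).
Hypothesis p_lim : filterlim p (at_right 0) (locally pc).

Lemma p_pos r : 0 < r < Rad -> 0 < p r.
Proof. apply structure_eqs. Qed.

Lemma rho_p_pos r : 0 < r < Rad -> 0 < rho (p r).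
Proof. intros Hr; apply rho_pos, p_pos, Hr. Qed.

Lemma m_pos r : 0 < r < Rad -> 0 < m r.
Proof.
  apply (incr_gt_right_lim m m 0 Rad); auto using Rle_refl.
  apply (incr_on_interval m (fun s => 4 * PI * s ^ 2 * rho (p s))).
  - apply structure_eqs.
  - intros s Hs; generalize PI_RGT_0 (rho_p_pos s Hs) (pow_lt s 2 ltac:(lra)); intros.
    apply Rmult_lt_0_compat; [apply Rmult_lt_0_compat; [apply Rmult_lt_0_compat |] |]; lra.
Qed.

Lemma p_le_pc r : 0 < r < Rad -> p r <= pc.
Proof.
  intros Hr.
  assert (Hlim : filterlim (fun s => - p s) (at_right 0) (locally (- pc))).
  { exact (filterlim_comp _ _ _ p opp _ _ _ p_lim (filterlim_opp pc)). }
  cut (- pc < - p r); [lra |].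
  apply (incr_gt_right_lim (fun s => - p s) (fun s => - p s) (- pc) Rad);
    auto using Rle_refl.
  apply (incr_on_interval (fun s => - p s) (fun s => m s * rho (p s) / s ^ 2)).
  - intros s Hs.
    replace (m s * rho (p s) / s ^ 2) with (opp (- (m s * rho (p s)) / s ^ 2))
      by (unfold opp; simpl; field; lra).
    apply (is_derive_opp p), structure_eqs, Hs.
  - intros s Hs; apply Rdiv_lt_0_compat; [apply Rmult_lt_0_compat |].
    + apply m_pos, Hs.
    + apply rho_p_pos, Hs.
    + apply pow_lt; lra.
Qed.

Lemma is_derive_eta_p r : 0 < r < Rad ->
  is_derive (fun s => eos_eta rho (p s)) r (- m r / r ^ 2).
Proof.
  intros Hr.
  assert (Hd := is_derive_comp (eos_eta rho) p r _ _
    (is_derive_eos_eta (p r) (p_pos r Hr)) (proj2 (proj2 (structure_eqs r Hr)))).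
  replace (- m r / r ^ 2) with (scal (- (m r * rho (p r)) / r ^ 2) (/ rho (p r))); auto.
  assert (Hrho := rho_p_pos r Hr).
  unfold scal; simpl; unfold mult; simpl; field; lra.
Qed.

(* Chain rule through rho(p) = (rho o P)(eta(p)). *)
Lemma is_derive_rho_p r : 0 < r < Rad ->
  is_derive (fun s => rho (p s)) r
    (- m r / r ^ 2 * Derive (fun x => rho (P x)) (eos_eta rho (p r))).
Proof.
  intros Hr.
  apply (is_derive_ext_loc (fun s => rho (P (eos_eta rho (p s))))).
  - generalize (locally_between 0 Rad r Hr); apply filter_imp.
    intros s Hs; rewrite P_eos_eta; auto; apply p_pos, Hs.
  - apply (is_derive_comp (fun x => rho (P x)) (fun s => eos_eta rho (p s))).
    + apply Derive_correct, rhoP_derivable, p_pos, Hr.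
    + apply is_derive_eta_p, Hr.
Qed.

Lemma is_derive_defect r : 0 < r < Rad ->
  is_derive (fun s => polytrope5_defect s (m s) (rho (p s)) (eos_eta rho (p s))) r
    (4 * PI * r * m r
     * (5 * rho (p r) - eos_eta rho (p r) * Derive (fun x => rho (P x)) (eos_eta rho (p r)))).
Proof.
  intros Hr.
  destruct (structure_eqs r Hr) as [_ [Hm _]].
  match goal with |- is_derive _ _ ?d => replace d with
    (12 * PI * r ^ 2 * rho (p r) * eos_eta rho (p r)
     + 4 * PI * r ^ 3 * ((- m r / r ^ 2 * Derive (fun x => rho (P x)) (eos_eta rho (p r)))
                         * eos_eta rho (p r) + rho (p r) * (- m r / r ^ 2))
     + 6 * m r * (4 * PI * r ^ 2 * rho (p r)) / r - 3 * m r ^ 2 / r ^ 2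
     - 3 * ((4 * PI * r ^ 2 * rho (p r)) * eos_eta rho (p r) + m r * (- m r / r ^ 2)))
    by (field; lra) end.
  apply (is_derive_polytrope5_defect m (fun s => rho (p s)) (fun s => eos_eta rho (p s)));
    [lra | exact Hm | apply is_derive_rho_p, Hr | apply is_derive_eta_p, Hr].
Qed.

Lemma defect_increasing x y : 0 < x -> x < y -> y < Rad ->
  polytrope5_defect x (m x) (rho (p x)) (eos_eta rho (p x))
  < polytrope5_defect y (m y) (rho (p y)) (eos_eta rho (p y)).
Proof.
  apply (incr_on_interval _ _ 0 Rad is_derive_defect).
  intros s Hs.
  generalize PI_RGT_0 (m_pos s Hs) (eta_drho_lt_5rho (p s) (p_pos s Hs)); intros.
  apply Rmult_lt_0_compat; [apply Rmult_lt_0_compat; [apply Rmult_lt_0_compat |] |]; lra.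
Qed.

Lemma defect_ge r : 0 < r < Rad ->
  -3 * eos_eta rho pc * m r <= polytrope5_defect r (m r) (rho (p r)) (eos_eta rho (p r)).
Proof.
  intros Hr; unfold polytrope5_defect.
  generalize PI_RGT_0 (pow_lt r 3 ltac:(lra)) (rho_p_pos r Hr) (m_pos r Hr)
    (eos_eta_pos (p r) (p_pos r Hr)) (eos_eta_le (p r) pc (conj (p_pos r Hr) (p_le_pc r Hr)));
    intros.
  assert (0 <= 4 * PI * r ^ 3 * rho (p r) * eos_eta rho (p r)).
  { left; apply Rmult_lt_0_compat; [apply Rmult_lt_0_compat; [apply Rmult_lt_0_compat |] |]; lra. }
  assert (0 <= 3 * m r ^ 2 / r) by (apply Rle_mult_inv_pos; nra).
  nra.
Qed.

Lemma defect_pos r : 0 < r < Rad ->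
  0 < polytrope5_defect r (m r) (rho (p r)) (eos_eta rho (p r)).
Proof.
  revert r.
  assert (Hlim : filterlim (fun s => -3 * eos_eta rho pc * m s) (at_right 0)
                   (locally (-3 * eos_eta rho pc * 0))).
  { exact (filterlim_comp _ _ _ m _ _ _ _ m_lim (filterlim_scal_r _ 0)). }
  rewrite Rmult_0_r in Hlim.
  exact (incr_gt_right_lim _ _ 0 Rad defect_increasing defect_ge Hlim).
Qed.

Lemma Phi_U_Q_var_pos r : 0 < r < Rad -> Phi (U_var rho m p r) (Q_var rho m p r) > 0.
Proof.
  intros Hr.
  apply Phi_pos_of_defect_pos; try lra.
  - apply m_pos, Hr.
  - apply rho_p_pos, Hr.
  - apply eos_eta_pos, p_pos, Hr.
  - apply defect_pos, Hr.
Qed.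

End RegularSolution.

End Enthalpy.

Lemma Q_le_half_of_Phi_eq_0 U Q : 0 < U < 1 -> 0 < Q < 1 -> Phi U Q = 0 -> Q <= 1 / 2.
Proof. unfold Phi; intros HU HQ H0; nra. Qed.

Lemma Phi_eq_0_solve_U U Q : Phi U Q = 0 -> 4 - 7 * Q <> 0 /\ U = 3 * (1 - 2 * Q) / (4 - 7 * Q).
Proof.
  unfold Phi; intros H0.
  assert (HQ : 4 - 7 * Q <> 0) by (intros HQ; assert (Q = 4 / 7) by lra; subst Q; lra).
  split; auto; field_simplify_eq; lra.
Qed.

Lemma Phi_flow_on_surface (n : R -> R) U Q W : Phi U Q = 0 ->
  (4 - 7 * Q) * FU n U Q W + (6 - 7 * U) * FQ U Q
  = 3 * (1 - 2 * Q) * (1 - U) ^ 2 * Q * (5 - n W).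
Proof.
  intros H0; destruct (Phi_eq_0_solve_U U Q H0) as [HQ ->].
  unfold FU, FQ; field; exact HQ.
Qed.

Lemma is_derive_Phi (Uf Qf : R -> R) (l0 dU dQ : R) :
  is_derive Uf l0 dU -> is_derive Qf l0 dQ ->
  is_derive (fun l => Phi (Uf l) (Qf l)) l0 ((4 - 7 * Qf l0) * dU + (6 - 7 * Uf l0) * dQ).
Proof.
  intros HU HQ; unfold Phi; auto_derive.
  - repeat split; eexists; eauto.
  - replace (Derive (fun x => Uf x) l0) with dU by (symmetry; apply is_derive_unique; auto).
    replace (Derive (fun x => Qf x) l0) with dQ by (symmetry; apply is_derive_unique; auto).
    ring.
Qed.

Theorem mainTheorem8 (rho P : R -> R)
  (Hrho : forall p, 0 < p -> 0 < rho p)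
  (Heta : forall p, 0 < p -> ex_RInt_gen (fun x => / rho x) (at_right 0) (at_point p))
  (HP : forall p, 0 < p -> P (eos_eta rho p) = p)
  (Hn : forall p, 0 < p ->
     ex_derive (fun x => rho (P x)) (eos_eta rho p) /\
     0 <= index_fun rho P (eos_eta rho p) < 5) :
  (forall (Rad pc : R) (m p : R -> R), 0 < Rad -> 0 < pc ->
     (forall r, 0 < r < Rad ->
        0 < p r /\
        is_derive m r (4 * PI * r ^ 2 * rho (p r)) /\
        is_derive p r (- (m r * rho (p r)) / r ^ 2)) ->
     filterlim m (at_right 0) (locally 0) ->
     filterlim p (at_right 0) (locally pc) ->
     forall r, 0 < r < Rad -> Phi (U_var rho m p r) (Q_var rho m p r) > 0)
  /\
  (forall (a : R) (Uf Qf Wf : R -> R) (l0 : R), 0 < a ->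
     is_derive Uf l0 (FU (nOmega rho P a) (Uf l0) (Qf l0) (Wf l0)) ->
     is_derive Qf l0 (FQ (Uf l0) (Qf l0)) ->
     is_derive Wf l0 (FW a (Uf l0) (Qf l0) (Wf l0)) ->
     0 < Uf l0 < 1 -> 0 < Qf l0 < 1 -> 0 < Wf l0 < 1 ->
     Phi (Uf l0) (Qf l0) = 0 ->
     Qf l0 <= 1 / 2 /\
     is_derive (fun l => Phi (Uf l) (Qf l)) l0
       (3 * (1 - 2 * Qf l0) * (1 - Uf l0) ^ 2 * Qf l0 * (5 - nOmega rho P a (Wf l0)))).
Proof.
  split.
  - intros Rad pc m p _ _.
    exact (Phi_U_Q_var_pos rho Hrho Heta P HP (fun q Hq => proj1 (Hn q Hq))
             (fun q Hq => proj2 (proj2 (Hn q Hq))) Rad pc m p).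
  - intros a Uf Qf Wf l0 _ HU HQ _ HU01 HQ01 _ H0.
    split; [exact (Q_le_half_of_Phi_eq_0 _ _ HU01 HQ01 H0) |].
    rewrite <- (Phi_flow_on_surface _ _ _ _ H0).
    apply is_derive_Phi; auto.
Qed.
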